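(* Let $F$ and $\tau=\tau_F$ be as in the context, and let $\tau_{\mathbf n}:=\widehat\tau_{\mathbf n}$ be the coefficients of the $d$-fold Walsh series generating $\tau$. Let $\sum_{\mathbf n\in\mathbb N_0^d}\psi_{\mathbf n}W_{\mathbf n}$ be a $d$-fold Walsh series which converges to zero by rectangles (or by cubes) at every point of $\mathbb G^d\setminus F$, and suppose $\psi_{\mathbf n}=o(\tau_{\mathbf n})$ as $\max_jn^j\to\infty$, i.e. there is a function $\varepsilon(\mathbf n)\to0$ as $\max_jn^j\to\infty$ with $|\psi_{\mathbf n}|\le\varepsilon(\mathbf n)|\tau_{\mathbf n}|$. Then $\psi_{\mathbf n}=0$ for all $\mathbf n$.
   Context: Fix an integer $d\ge 2$. $\mathbb G$ is the dyadic group: sequences $g=(g_k)_{k\ge0}$, $g_k\in\{0,1\}$, with coordinatewise addition mod 2 ($\oplus$) and product topology; $\mathbb G^d$ its $d$-th power, $\mu$ the normalized Haar measure. For $n\in\mathbb N_0$, $n=\sum_kn_k2^k$, $n_k\in\{0,1\}$. Dyadic interval of rank $k$: $\Delta^{(k)}_m=\{g: g_t=m_{k-1-t},\ 0\le t<k\}$; dyadic cube $\Delta^{(k)}_{\mathbf m}=\prod_l\Delta^{(k)}_{m^l}$, $\mathbf m\in\{0,\dots,2^k-1\}^d$. Vector order coordinatewise, $\mathbf 1=(1,\dots,1)$. Walsh functions $W_n(g)=\prod_k(-1)^{g_kn_k}$, $W_{\mathbf n}(\mathbf g)=\prod_lW_{n^l}(g^l)$; $W^{(k)}_{\mathbf n\mathbf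 m}$ is the constant value of $W_{\mathbf n}$ on $\Delta^{(k)}_{\mathbf m}$ ($\mathbf n,\mathbf m<2^k\mathbf 1$); $R_{k\mathbf 1}:=W_{2^k\mathbf 1}$. Partial sums of $\sum a_{\mathbf n}W_{\mathbf n}$: $S_{\mathbf N}=\sum_{\mathbf n<\mathbf N}a_{\mathbf n}W_{\mathbf n}$; convergence by rectangles means $S_{\mathbf N}(\mathbf g)\to S$ as $\min_jN^j\to\infty$, by cubes means $S_{N\mathbf 1}(\mathbf g)\to S$ as $N\to\infty$. Quasimeasure: $\tau$ on dyadic cubes with $\tau(\Delta^{(k)}_{\mathbf m})=\sum_{\boldsymbol\sigma\in\{0,1\}^d}\tau(\Delta^{(k+1)}_{2\mathbf m+\boldsymbol\sigma})$; $\widehat\tau_{\mathbf n}=\sum_{\mathbf m<2^k\mathbf 1}W^{(k)}_{\mathbf n\mathbf m}\tau(\Delta^{(k)}_{\mathbf m})$ for $\mathbf n<2^k\mathbf 1$; the series $\sum\widehat\tau_{\mathbf n}W_{\mathbf n}$ generates $\tau$. For nonempty closed $E$, $\tau_E$ is the unique nonnegative quasimeasure with $\tau_E(\mathbb G^d)=1$, $\tau_E(\Delta)=0$ iff $\Delta\cap E=\emptyset$, which splits the value of any cube meeting $E$ equally among those of its $2^d$ children meeting $E$. The set $F$: $m_1=0$, $m_{s+1}=2(2m_s+1)$; $F_s=\bigcup_{\mathbf m,\mathbf m'<2^{m_s}\mathbf 1}\{\mathbf g\in\Delta^{(2m_s)}_{2^{m_s}\mathbf m+\mathbf m'}: R_{2m_s\mathbf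 1}(\mathbf g)=W^{(m_s)}_{\mathbf m\mathbf m'}\}$; $F=\bigcap_{s\ge1}F_s$. *)

From HB Require Import structures.
From mathcomp Require Import all_boot all_order all_algebra.
From mathcomp Require Import reals.
Set Implicit Arguments. Unset Strict Implicit. Unset Printing Implicit Defensive.
Import Order.TTheory GRing.Theory Num.Theory.
Local Open Scope ring_scope.

Section Dyadic.
Variables (R : realType) (d : nat).

(* A point of G^d: coordinate l, digit t. *)
Definition point := 'I_d -> nat -> bool.
Definition mindex := 'I_d -> nat.

Definition bit (x i : nat) : bool := odd (x %/ 2 ^ i).

(* d-dimensional Walsh function W_n(g) = prod_l prod_k (-1)^(g^l_k n^l_k);
   digits k >= n^l of n^l vanish, so the product over k < n^l suffices. *)
Definition walsh (n : mindex) (g : point) : R :=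
  \prod_(l < d) \prod_(t < n l) (-1) ^+ (g l t && bit (n l) t).

(* g belongs to the dyadic cube Delta^{(k)}_m: g^l_t = m^l_{k-1-t}, t < k *)
Definition in_cube (k : nat) (m : mindex) (g : point) : Prop :=
  forall (l : 'I_d) (t : nat), (t < k)%N -> g l t = bit (m l) (k.-1 - t).

Definition valid_index (k : nat) (m : mindex) : Prop :=
  forall l, (m l < 2 ^ k)%N.

(* W^{(k)}_{n m}: constant value of W_n on Delta^{(k)}_m (n, m < 2^k 1) *)
Definition walshk (k : nat) (n m : mindex) : R :=
  \prod_(l < d) \prod_(t < k) (-1) ^+ (bit (m l) (k.-1 - t) && bit (n l) t).

Definition rademacher (k : nat) (g : point) : R :=
  walsh (fun _ => 2 ^ k)%N g.

(* m_1 = 0, m_{s+1} = 2(2 m_s + 1); mseq s = m_{s+1} *)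
Fixpoint mseq (s : nat) : nat :=
  match s with 0 => 0 | s'.+1 => 2 * (2 * mseq s' + 1) end%N.

Definition setFs (s : nat) (g : point) : Prop :=
  exists m m' : mindex, valid_index (mseq s) m /\ valid_index (mseq s) m' /\
    in_cube (2 * mseq s) (fun l => 2 ^ mseq s * m l + m' l)%N g /\
    rademacher (2 * mseq s) g = walshk (mseq s) m m'.

Definition setF (g : point) : Prop := forall s, setFs s g.

Definition meets (E : point -> Prop) (k : nat) (m : mindex) : Prop :=
  exists g, in_cube k m g /\ E g.

(* tau (given on dyadic cubes, tau k m = tau(Delta^{(k)}_m)) is the
   quasimeasure tau_E described in the paper. *)
Definition is_tau_E (E : point -> Prop) (tau : nat -> mindex -> R) : Prop :=
  [/\ tau 0%N (fun _ => 0%N) = 1,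
      (forall k m, valid_index k m -> 0 <= tau k m),
      (forall k m, valid_index k m -> (tau k m = 0 <-> ~ meets E k m)),
      (forall k m, valid_index k m ->
         tau k m = \sum_(s : {ffun 'I_d -> bool})
                     tau k.+1 (fun l => 2 * m l + s l)%N) &
      (forall k m (s s' : {ffun 'I_d -> bool}), valid_index k m ->
         meets E k.+1 (fun l => 2 * m l + s l)%N ->
         meets E k.+1 (fun l => 2 * m l + s' l)%N ->
         tau k.+1 (fun l => 2 * m l + s l)%N =
         tau k.+1 (fun l => 2 * m l + s' l)%N)].

(* Fourier-Walsh coefficient hat tau_n, computed at rank k = max_j n^j
   (n^j < 2^{n^j} <= 2^k); independent of k for quasimeasures. *)
Definition tauhat (tau : nat -> mindex -> R) (n : mindex) : R :=
  let k := (\max_(j < d) n j)%N in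
  \sum_(m : {ffun 'I_d -> 'I_(2 ^ k)})
     walshk k n (fun l => val (m l)) * tau k (fun l => val (m l)).

Definition psum (psi : mindex -> R) (N : mindex) (g : point) : R :=
  \sum_(n : {ffun 'I_d -> 'I_(\max_(j < d) N j)%N} | [forall j, (n j < N j)%N])
     psi (fun l => val (n l)) * walsh (fun l => val (n l)) g.

Definition conv0_rect (psi : mindex -> R) (g : point) : Prop :=
  forall e : R, 0 < e -> exists M : nat, forall N : mindex,
    (forall j, (M <= N j)%N) -> `|psum psi N g| < e.

Definition conv0_cube (psi : mindex -> R) (g : point) : Prop :=
  forall e : R, 0 < e -> exists M : nat, forall N : nat,
    (M <= N)%N -> `|psum psi (fun _ => N) g| < e.

Definition vanish_at_infty (eps : mindex -> R) : Prop :=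
  forall e : R, 0 < e -> exists M : nat, forall n : mindex,
    (M <= \max_(j < d) n j)%N -> `|eps n| < e.

End Dyadic.

(* Let ψ_k(Δ) = 2^{-kd} Σ_{n < 2^k·1} ψ_n W_n|_Δ be the quasimeasure generated by the series
   on the cubes Δ of rank k: S_{2^k·1}(g) = 2^{kd} ψ_k(Δ_k(g)), and ψ_k(Δ) is the sum of
   ψ_{k+1} over the children of Δ.  If ψ_k(Δ) ≠ 0 for a cube Δ missing F, descending at every
   rank to a child of largest |ψ| gives a point of Δ, hence off F, along which |S_{2^k·1}| does
   not decrease; so ψ_k vanishes on the cubes missing F.

   At a rank K = 2m_s, the children meeting F of a cube Δ meeting F are exactly those on which
   R_{K·1} takes the value V_s(Δ) = W^{(m_s)}_{𝐦𝐦'} prescribed by F_s.  Hence the coefficients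
   with indices n + 2^K·1, n < 2^K·1, of both ψ and τ are the Walsh transforms of V_s ψ_K and
   V_s τ_K, and Parseval with |ψ_n| ≤ ε|τ_n| gives Σ ψ_K² ≤ ε² Σ τ_K².  All cubes of a given
   rank meeting F have the same number of children meeting F, so τ_K, which splits equally,
   is constant on its support; with Σ τ_K = 1 this yields Σ |ψ_K| ≤ ε, while |ψ_n| ≤ Σ |ψ_K|
   for n < 2^K·1. *)

From HB Require Import structures.
From mathcomp Require Import all_boot all_order all_algebra.
From mathcomp Require Import boolp reals.
From mathcomp Require Import zify ring lra.
Set Implicit Arguments. Unset Strict Implicit. Unset Printing Implicit Defensive.
Import Order.TTheory GRing.Theory Num.Theory.

Local Open Scope nat_scope.

(** * Binary digits and dyadic cubes *)

Lemma bit_0 x : bit x 0 = odd x.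
Proof. by rewrite /bit expn0 divn1. Qed.

Lemma bit_S x i : bit x i.+1 = bit (x %/ 2) i.
Proof. by rewrite /bit expnS divnMA. Qed.

Lemma half_dbl_add x (b : bool) : (2 * x + b) %/ 2 = x.
Proof. by rewrite mulnC divnMDl // divn_small ?addn0 //; case: b. Qed.

Lemma bit_dbl_add0 x (b : bool) : bit (2 * x + b) 0 = b.
Proof. by rewrite bit_0 oddD oddM /=; case: b. Qed.

Lemma bit_dbl_addS x (b : bool) i : bit (2 * x + b) i.+1 = bit x i.
Proof. by rewrite bit_S half_dbl_add. Qed.

Lemma bit_dbl_add_rev x (b : bool) k t : t <= k ->
  bit (2 * x + b) (k - t) = if t == k then b else bit x (k.-1 - t).
Proof.
move=> tk; case: eqP => [->|ne]; first by rewrite subnn bit_dbl_add0.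
by rewrite (_ : k - t = (k.-1 - t).+1) ?bit_dbl_addS //; lia.
Qed.

Lemma bit_small x t : x < 2 ^ t -> bit x t = false.
Proof. by move=> h; rewrite /bit divn_small. Qed.

Lemma eq_bits k a b : a < 2 ^ k -> b < 2 ^ k ->
  (forall t, t < k -> bit a t = bit b t) -> a = b.
Proof.
elim: k a b => [|k IH] a b ha hb h.
  by move: ha hb; rewrite expn0 !ltnS !leqn0 => /eqP-> /eqP->.
rewrite (divn_eq a 2) (divn_eq b 2) !modn2 -!bit_0 h //; congr (_ * _ + _).
apply: IH; rewrite ?ltn_divLR -?expnSr // => t tk.
by rewrite -!bit_S h.
Qed.

Lemma bit_addX a K t : a < 2 ^ K -> t <= K ->
  bit (a + 2 ^ K) t = (t == K) || bit a t.
Proof.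
move=> ha htK; rewrite /bit.
have -> : 2 ^ K = 2 ^ (K - t) * 2 ^ t by rewrite -expnD subnK.
rewrite divnDMl ?expn_gt0 // oddD oddX.
case: (ltngtP t K) htK => // [tK|->] _; last by rewrite subnn divn_small.
by rewrite subn_eq0 leqNgt tK /= addbF.
Qed.

Lemma bitX k t : bit (2 ^ k) t = (t == k).
Proof.
case: (leqP t k) => h; first by rewrite -[2 ^ k]add0n bit_addX ?expn_gt0 // /bit div0n orbF.
by rewrite bit_small ?ltn_exp2l // gtn_eqF.
Qed.

Lemma bit_ge x t : x <= t -> bit x t = false.
Proof.
by move=> h; apply: bit_small; apply: leq_trans (ltn_expl x (ltnSn 1)) _; rewrite leq_exp2l.
Qed.

Lemma pow2_gt0 k : 0 < 2 ^ k.
Proof. by rewrite expn_gt0. Qed.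

Fixpoint dyadic_index k (f : nat -> bool) : nat :=
  if k is k'.+1 then 2 * dyadic_index k' f + f k' else 0.

Lemma dyadic_index_lt k f : dyadic_index k f < 2 ^ k.
Proof. by elim: k => [|k IH] //=; rewrite expnS; case: (f k) => /=; lia. Qed.

Lemma bit_dyadic_index k f t : t < k -> bit (dyadic_index k f) (k.-1 - t) = f t.
Proof.
elim: k => [|k IH] // tk /=; rewrite bit_dbl_add_rev; last exact: tk.
have [lt|->] : t < k \/ t = k by lia.
  by rewrite (ltn_eqF lt) IH.
by rewrite eqxx.
Qed.

Lemma eq_dyadic_index k f f' : (forall t, t < k -> f t = f' t) ->
  dyadic_index k f = dyadic_index k f'.
Proof. by elim: k => [|k IH] //= h; rewrite IH ?h // => t tk; apply: h; lia. Qed.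

Section Cubes.
Variable d : nat.

Definition cube_index k (g : point d) : mindex d := fun l => dyadic_index k (g l).

Definition child (m : mindex d) (s : {ffun 'I_d -> bool}) : mindex d :=
  fun l => 2 * m l + s l.

Lemma cube_index_valid k g : valid_index k (cube_index k g).
Proof. by move=> l; apply: dyadic_index_lt. Qed.

Lemma in_cube_index k g : in_cube k (cube_index k g) g.
Proof. by move=> l t tk; rewrite /cube_index bit_dyadic_index. Qed.

Lemma in_cube_index_eq k m g : valid_index k m -> in_cube k m g -> cube_index k g = m.
Proof.
move=> v c; apply: funext => l.
apply: (@eq_bits k); [exact: dyadic_index_lt | exact: v | move=> u uk].
have -> : u = k.-1 - (k.-1 - u) by lia.
by rewrite -c /cube_index ?bit_dyadic_index //; lia.
Qed.

Lemma eq_cube_index k g g' : (forall l t, t < k -> g l t = g' l t) ->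
  cube_index k g = cube_index k g'.
Proof.
by move=> h; apply: funext => l; apply: eq_dyadic_index => t; apply: h.
Qed.

Lemma child_valid k m s : valid_index k m -> valid_index k.+1 (child m s).
Proof. by move=> v l; move: (v l); rewrite expnS /child; case: (s l) => /=; lia. Qed.

Lemma in_cube_child k m s g :
  in_cube k.+1 (child m s) g <-> in_cube k m g /\ forall l, g l k = s l.
Proof.
split=> [c|[c e] l t tk]; last first.
  by rewrite /child bit_dbl_add_rev //; case: eqP => [->|ne]; [apply: e | apply: c; lia].
split=> [l t tk|l]; last by rewrite (c l k) //= bit_dbl_add_rev // eqxx.
by rewrite (c l t) /= ?bit_dbl_add_rev ?(ltn_eqF tk) //; lia.
Qed.

Lemma meets_parent (E : point d -> Prop) k m s :
  meets E k.+1 (child m s) -> meets E k m.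
Proof. by case=> g [/in_cube_child[c _] Eg]; exists g. Qed.

Lemma valid_child_decomp k (m : mindex d) : valid_index k.+1 m ->
  exists p s, valid_index k p /\ m = child p s.
Proof.
move=> v; exists (fun l => m l %/ 2)%N, [ffun l => odd (m l)]; split.
  by move=> l; rewrite ltn_divLR // -expnSr.
apply: funext => l.
by rewrite /child ffunE [LHS](divn_eq (m l) 2) modn2 mulnC.
Qed.

Lemma valid_index0 (m : mindex d) : valid_index 0 m -> m = (fun _ => 0%N).
Proof.
by move=> v; apply: funext => l; move: (v l); rewrite expn0 ltnS leqn0 => /eqP.
Qed.

End Cubes.

Local Open Scope ring_scope.

(** * Walsh matrices *)

Lemma prod_widen (R : comPzRingType) n1 n2 (F : nat -> R) : (n1 <= n2)%N ->
  (forall i, (n1 <= i < n2)%N -> F i = 1) -> \prod_(i < n2) F i = \prod_(i < n1) F i.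
Proof.
move=> le h; rewrite (big_ord_widen _ _ le) [RHS]big_mkcond /=.
by apply: eq_bigr => i _; case: ltnP => // hi; rewrite h // hi ltn_ord.
Qed.

Lemma sum_pow2S (R : zmodType) k (F : nat -> R) :
  \sum_(x < 2 ^ k.+1) F x = \sum_(y < 2 ^ k) (F (2 * y + false)%N + F (2 * y + true)%N).
Proof.
rewrite expnS; elim: (2 ^ k)%N => [|n IH]; first by rewrite muln0 !big_ord0.
have -> : (2 * n.+1 = (2 * n).+2)%N by lia.
by rewrite 3!big_ord_recr /= IH -addrA addn0 addn1.
Qed.

Section WalshMatrix.
Variables (R : realType) (d : nat).

Definition grid k := {ffun 'I_d -> 'I_(2 ^ k)}.

Definition gval k (m : grid k) : mindex d := fun l => m l.

Definition to_grid k (m : mindex d) : grid k :=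
  [ffun l => Ordinal (ltn_pmod (m l) (pow2_gt0 k))].

Lemma gval_valid k (m : grid k) : valid_index k (gval m).
Proof. by move=> l; apply: ltn_ord. Qed.

Lemma gval_to_grid k m : valid_index k m -> gval (to_grid k m) = m.
Proof.
by move=> v; apply: funext => l; rewrite /gval /to_grid ffunE /= modn_small.
Qed.

Lemma to_grid_gval k (m : grid k) : to_grid k (gval m) = m.
Proof. by apply/ffunP => l; apply: val_inj; rewrite /to_grid ffunE /= modn_small ?ltn_ord. Qed.

Lemma sum_grid_child k (F : mindex d -> R) :
  \sum_(m : grid k.+1) F (gval m) =
  \sum_(m : grid k) \sum_(s : {ffun 'I_d -> bool}) F (child (gval m) s).
Proof.
rewrite pair_big /=.
pose merge (p : grid k * {ffun 'I_d -> bool}) := to_grid k.+1 (child (gval p.1) p.2).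
pose unmerge (m : grid k.+1) :=
  (to_grid k (fun l => gval m l %/ 2)%N, [ffun l => odd (gval m l)]).
have merge_val p : gval (merge p) = child (gval p.1) p.2.
  by rewrite gval_to_grid //; apply: child_valid; apply: gval_valid.
rewrite (reindex merge) /=; last first.
  exists unmerge => [[m s] _ | m _].
  - rewrite /unmerge merge_val /=; congr (_, _).
      rewrite -[RHS]to_grid_gval; congr to_grid.
      by apply: funext => l; rewrite half_dbl_add.
    by apply/ffunP => l; rewrite ffunE /child oddD oddM; case: (s l).
  - apply: (can_inj (@to_grid_gval k.+1)); rewrite merge_val gval_to_grid /=; last first.
      by move=> l; rewrite ltn_divLR // -expnSr; apply: gval_valid.
    apply: funext => l; rewrite /child ffunE.
    by rewrite [RHS](divn_eq (gval m l) 2) modn2 mulnC.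
by apply: eq_bigr => p _; rewrite merge_val.
Qed.

Lemma walsh_cube_index k (n : mindex d) g : valid_index k n ->
  walsh R n g = walshk R k n (cube_index k g).
Proof.
move=> v; apply: eq_bigr => l _.
pose F t := (-1) ^+ (g l t && bit (n l) t) : R.
have trunc a : (a <= k + n l)%N -> (forall t, (a <= t)%N -> bit (n l) t = false) ->
    \prod_(t < a) F t = \prod_(t < k + n l) F t.
  move=> le h; symmetry; apply: prod_widen => // t /andP[ge_t _].
  by rewrite /F h ?andbF.
rewrite (trunc (n l)) ?leq_addl //; last by move=> t; apply: bit_ge.
rewrite -(trunc k) ?leq_addr //; last first.
  by move=> t kt; apply: bit_small; apply: leq_trans (v l) _; rewrite leq_exp2l.
by apply: eq_bigr => t _; rewrite /cube_index bit_dyadic_index.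
Qed.

Lemma rademacherE k (g : point d) : rademacher R k g = \prod_l (-1) ^+ (g l k).
Proof.
apply: eq_bigr => l _ /=.
rewrite (@prod_widen _ k.+1 _ (fun t => (-1) ^+ (g l t && bit (2 ^ k) t))); first last.
- by move=> t /andP[kt _]; rewrite bitX gtn_eqF ?andbF.
- exact: ltn_expl.
rewrite big_ord_recr big1 ?bitX ?eqxx ?andbT => [|t _]; first exact: mul1r.
by rewrite bitX (ltn_eqF (ltn_ord t)) andbF.
Qed.

Definition walsh1 k (a x : nat) : R := \prod_(t < k) (-1) ^+ (bit x (k.-1 - t) && bit a t).

Lemma walshkE k (n m : mindex d) : walshk R k n m = \prod_l walsh1 k (n l) (m l).
Proof. by []. Qed.

Lemma walshk_child k (n m : mindex d) s :
  walshk R k.+1 n (child m s) = walshk R k n m * \prod_l (-1) ^+ (s l && bit (n l) k).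
Proof.
rewrite /walshk -big_split /=; apply: eq_bigr => l _.
rewrite big_ord_recr /= subnn bit_dbl_add0; congr (_ * _).
by apply: eq_bigr => t _; rewrite /child bit_dbl_add_rev ?(ltn_eqF (ltn_ord t)) // ltnW.
Qed.

Lemma walshk_child_low k (n m : mindex d) s : valid_index k n ->
  walshk R k.+1 n (child m s) = walshk R k n m.
Proof.
by move=> v; rewrite walshk_child big1 ?mulr1 // => l _; rewrite bit_small ?andbF.
Qed.

Lemma walshk_sqr k (n m : mindex d) : walshk R k n m ^+ 2 = 1.
Proof.
by rewrite -prodrXl big1 // => l _; rewrite -prodrXl big1 // => t _; apply: sqrr_sign.
Qed.

Lemma normr_walshk k (n m : mindex d) : `|walshk R k n m| = 1.
Proof.
by rewrite normr_prod big1 // => l _; rewrite normr_prod big1 // => t _; apply: normr_sign.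
Qed.

Lemma sum_sign_bits k (h : nat -> bool) :
  \sum_(x < 2 ^ k) \prod_(t < k) (-1) ^+ (bit x t && h t) =
  \prod_(t < k) (if h t then 0 else 2) :> R.
Proof.
elim: k h => [|k IH] h; first by rewrite expn0 big_ord1 !big_ord0.
have split_low y (b : bool) : \prod_(t < k.+1) (-1) ^+ (bit (2 * y + b) t && h t) =
    (-1) ^+ (b && h 0%N) * \prod_(t < k) (-1) ^+ (bit y t && h t.+1) :> R.
  by rewrite big_ord_recl bit_dbl_add0; congr (_ * _); apply: eq_bigr => t _; rewrite bit_dbl_addS.
rewrite (sum_pow2S k (fun x => \prod_(t < k.+1) (-1) ^+ (bit x t && h t))).
under eq_bigr do rewrite !split_low -mulrDl.
rewrite -mulr_sumr (IH (fun t => h t.+1)) big_ord_recl; congr (_ * _).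
by case: (h 0%N); rewrite /= ?expr0 ?expr1 ?addrN.
Qed.

Lemma sum_sign_bits_xor k a b : (a < 2 ^ k)%N -> (b < 2 ^ k)%N ->
  \sum_(x < 2 ^ k) \prod_(t < k) (-1) ^+ (bit x t && (bit a (k.-1 - t) (+) bit b (k.-1 - t)))
  = if a == b then (2 ^ k)%:R else 0 :> R.
Proof.
move=> ha hb; rewrite (sum_sign_bits k (fun t => bit a (k.-1 - t) (+) bit b (k.-1 - t))).
case: eqP => [<-|ne].
  rewrite (eq_bigr (fun _ => 2)) ?prodr_const ?card_ord ?natrX // => t _.
  by rewrite addbb.
have /existsP [t abt] : [exists t : 'I_k, bit a t != bit b t].
  apply: contraT => /existsPn same; case: ne; apply: (eq_bits ha hb) => t tk.
  by apply/eqP; rewrite -[_ == _]negbK (same (Ordinal tk)).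
have kt : (k.-1 - t < k)%N by have := ltn_ord t; lia.
rewrite (bigD1 (Ordinal kt)) //= (_ : k.-1 - (k.-1 - t) = t)%N; last by have := ltn_ord t; lia.
by rewrite -negb_eqb abt mul0r.
Qed.

Lemma walsh1_orthogonal_rows k a b : (a < 2 ^ k)%N -> (b < 2 ^ k)%N ->
  \sum_(x < 2 ^ k) walsh1 k a x * walsh1 k b x = if a == b then (2 ^ k)%:R else 0.
Proof.
move=> ha hb; rewrite -(sum_sign_bits_xor ha hb); apply: eq_bigr => x _.
rewrite /walsh1 -big_split /= (reindex_inj rev_ord_inj) /=; apply: eq_bigr => t _.
have tk := ltn_ord t.
have -> : (k.-1 - (k - t.+1) = t)%N by lia.
have -> : (k - t.+1 = k.-1 - t)%N by lia.
by rewrite -signr_addb -andb_addr.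
Qed.

Lemma walsh1_orthogonal_cols k x y : (x < 2 ^ k)%N -> (y < 2 ^ k)%N ->
  \sum_(a < 2 ^ k) walsh1 k a x * walsh1 k a y = if x == y then (2 ^ k)%:R else 0.
Proof.
move=> hx hy; rewrite -(sum_sign_bits_xor hx hy); apply: eq_bigr => a _.
rewrite /walsh1 -big_split /=; apply: eq_bigr => t _.
by rewrite -signr_addb -andb_addl andbC.
Qed.

Definition ncubes k : R := ((2 ^ k) ^ d)%:R.

Lemma ncubes_gt0 k : 0 < ncubes k.
Proof. by rewrite ltr0n !expn_gt0. Qed.

Lemma ncubesS k : ncubes k.+1 = ncubes k * (2 ^ d)%:R.
Proof. by rewrite /ncubes -natrM expnS expnMn mulnC. Qed.

Lemma sum_grid_prod k (F : 'I_d -> nat -> R) :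
  \sum_(m : grid k) \prod_l F l (gval m l) = \prod_l \sum_(x < 2 ^ k) F l x.
Proof. by rewrite bigA_distr_bigA. Qed.

Lemma prod_eq_if k (n n' : grid k) (c : R) :
  \prod_l (if gval n l == gval n' l then c else 0) = if n == n' then c ^+ d else 0.
Proof.
case: eqP => [->|ne].
  by rewrite (eq_bigr (fun _ => c)) ?prodr_const ?card_ord // => l _; rewrite eqxx.
have /existsP [l nl] : [exists l, n l != n' l].
  apply: contraT => /existsPn same; case: ne; apply/ffunP => l.
  by apply/eqP; rewrite -[_ == _]negbK same.
by rewrite (bigD1 l) //= ifN ?mul0r.
Qed.

Lemma walshk_orthogonal_rows k (n n' : grid k) :
  \sum_(m : grid k) walshk R k (gval n) (gval m) * walshk R k (gval n') (gval m) =
  if n == n' then ncubes k else 0.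
Proof.
under eq_bigr do rewrite !walshkE -big_split /=.
rewrite (sum_grid_prod k (fun l x => walsh1 k (gval n l) x * walsh1 k (gval n' l) x)).
under eq_bigr => l _ do rewrite (walsh1_orthogonal_rows (gval_valid n l) (gval_valid n' l)).
by rewrite prod_eq_if -natrX.
Qed.

Lemma walshk_orthogonal_cols k (m m' : grid k) :
  \sum_(n : grid k) walshk R k (gval n) (gval m) * walshk R k (gval n) (gval m') =
  if m == m' then ncubes k else 0.
Proof.
under eq_bigr do rewrite !walshkE -big_split /=.
rewrite (sum_grid_prod k (fun l a => walsh1 k a (gval m l) * walsh1 k a (gval m' l))).
under eq_bigr => l _ do rewrite (walsh1_orthogonal_cols (gval_valid m l) (gval_valid m' l)).
by rewrite prod_eq_if -natrX.
Qed.

Definition wcoef k (a : mindex d -> R) (n : mindex d) : R :=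
  \sum_(m : grid k) walshk R k n (gval m) * a (gval m).

Definition series_qm (psi : mindex d -> R) k (m : mindex d) : R :=
  (ncubes k)^-1 * \sum_(n : grid k) psi (gval n) * walshk R k (gval n) m.

Lemma sum_grid_delta k (n : grid k) (F : grid k -> R) :
  \sum_(n' : grid k) F n' * (if n == n' then ncubes k else 0) = F n * ncubes k.
Proof.
rewrite (bigD1 n) //= eqxx big1 ?addr0 // => n' /negbTE.
by rewrite eq_sym => ->; rewrite mulr0.
Qed.

Lemma wcoef_series_qm k psi n : valid_index k n -> wcoef k (series_qm psi k) n = psi n.
Proof.
move=> /gval_to_grid <-; set n0 := to_grid k n.
transitivity ((ncubes k)^-1 * \sum_(n' : grid k) psi (gval n') *
   \sum_(m : grid k) walshk R k (gval n0) (gval m) * walshk R k (gval n') (gval m)).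
  rewrite /wcoef /series_qm [RHS]mulr_sumr; under [RHS]eq_bigr do rewrite 2!mulr_sumr.
  rewrite [RHS]exchange_big; apply: eq_bigr => m _ /=.
  by rewrite 2!mulr_sumr; apply: eq_bigr => n' _; ring.
under eq_bigr do rewrite walshk_orthogonal_rows.
by rewrite sum_grid_delta mulrC mulfK // lt0r_neq0 // ncubes_gt0.
Qed.

Lemma series_qm_wcoef k a m : valid_index k m -> series_qm (wcoef k a) k m = a m.
Proof.
move=> /gval_to_grid <-; set m0 := to_grid k m.
transitivity ((ncubes k)^-1 * \sum_(m' : grid k) a (gval m') *
   \sum_(n : grid k) walshk R k (gval n) (gval m0) * walshk R k (gval n) (gval m')).
  rewrite /wcoef /series_qm; congr (_ * _).
  under eq_bigr do rewrite mulr_suml.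
  rewrite exchange_big; apply: eq_bigr => m' _ /=; rewrite mulr_sumr.
  by apply: eq_bigr => n _; ring.
under eq_bigr do rewrite walshk_orthogonal_cols.
by rewrite sum_grid_delta mulrC mulfK // lt0r_neq0 // ncubes_gt0.
Qed.

Lemma wcoef_parseval k (a : mindex d -> R) :
  \sum_(n : grid k) wcoef k a (gval n) ^+ 2 = ncubes k * \sum_(m : grid k) a (gval m) ^+ 2.
Proof.
transitivity (\sum_(m : grid k) \sum_(m' : grid k) a (gval m) * a (gval m') *
   \sum_(n : grid k) walshk R k (gval n) (gval m) * walshk R k (gval n) (gval m')).
  under eq_bigr do rewrite /wcoef expr2 mulr_suml.
  rewrite exchange_big; apply: eq_bigr => m _ /=.
  under eq_bigr do rewrite mulr_sumr.
  rewrite exchange_big; apply: eq_bigr => m' _ /=; rewrite mulr_sumr.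
  by apply: eq_bigr => n _; ring.
rewrite mulr_sumr; apply: eq_bigr => m _.
under eq_bigr do rewrite walshk_orthogonal_cols.
by rewrite (sum_grid_delta m (fun m2 => a (gval m) * a (gval m2))) mulrC expr2.
Qed.

Lemma wcoef_child k a n : valid_index k n ->
  wcoef k.+1 a n = wcoef k (fun m => \sum_(s : {ffun 'I_d -> bool}) a (child m s)) n.
Proof.
move=> v; rewrite /wcoef (sum_grid_child k (fun m => walshk R k.+1 n m * a m)).
by apply: eq_bigr => m _; rewrite mulr_sumr; apply: eq_bigr => s _; rewrite walshk_child_low.
Qed.

Lemma series_qm_split psi k m : valid_index k m ->
  series_qm psi k m = \sum_(s : {ffun 'I_d -> bool}) series_qm psi k.+1 (child m s).
Proof.
move=> v; rewrite -[RHS](series_qm_wcoef (fun m => \sum_s series_qm psi k.+1 (child m s)) v).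
congr (_ * _); apply: eq_bigr => n _; congr (_ * _).
have vS : valid_index k.+1 (gval n).
  by move=> l; apply: leq_trans (gval_valid n l) _; rewrite leq_exp2l.
by rewrite -wcoef_child ?wcoef_series_qm //; apply: gval_valid.
Qed.

End WalshMatrix.

(** * Quasimeasures generated by series converging to zero *)

Definition conv0_dyadic (R : realType) d (psi : mindex d -> R) (g : point d) : Prop :=
  forall e : R, 0 < e -> exists k0 : nat, forall k, (k0 <= k)%N ->
    `|psum psi (fun _ => 2 ^ k)%N g| < e.

Lemma conv0_rect_dyadic (R : realType) d (psi : mindex d -> R) g :
  conv0_rect psi g -> conv0_dyadic psi g.
Proof.
move=> c e e0; have [M HM] := c e e0; exists M => k kM; apply: HM => j.
exact: leq_trans kM (ltnW (ltn_expl k (ltnSn 1))).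
Qed.

Lemma conv0_cube_dyadic (R : realType) d (psi : mindex d -> R) g :
  conv0_cube psi g -> conv0_dyadic psi g.
Proof.
move=> c e e0; have [M HM] := c e e0; exists M => k kM; apply: HM.
exact: leq_trans kM (ltnW (ltn_expl k (ltnSn 1))).
Qed.

Section DyadicPartialSums.
Variables (R : realType) (d : nat) (psi : mindex d -> R).
Hypothesis d_gt0 : (0 < d)%N.

(* [psum] sums over ['I_(\max_j N j)], which is only propositionally ['I_(2 ^ k)]. *)
Lemma sum_ffun_cast X k (e : (X = 2 ^ k)%N) (F : mindex d -> R) :
  \sum_(n : {ffun 'I_d -> 'I_X} | [forall j, (n j < 2 ^ k)%N]) F (fun l => val (n l)) =
  \sum_(n : grid d k) F (gval n).
Proof. by subst X; apply: eq_bigl => n; apply/forallP => j; apply: ltn_ord. Qed.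

Lemma psum_dyadic k g :
  psum psi (fun _ => 2 ^ k)%N g = ncubes R d k * series_qm psi k (cube_index k g).
Proof.
have max_k : (\max_(j < d) (fun _ => 2 ^ k) j = 2 ^ k)%N.
  apply/eqP; rewrite eqn_leq; apply/andP; split; first by apply/bigmax_leqP.
  exact: (@leq_bigmax _ (fun _ => 2 ^ k)%N (Ordinal d_gt0)).
rewrite /psum (sum_ffun_cast max_k (fun n => psi n * walsh R n g)).
rewrite /series_qm mulVKf ?lt0r_neq0 ?ncubes_gt0 //; apply: eq_bigr => n _.
by rewrite (walsh_cube_index R g (gval_valid n)).
Qed.

End DyadicPartialSums.

Section Support.
Variables (R : realType) (d : nat) (psi : mindex d -> R) (E : point d -> Prop).
Hypothesis d_gt0 : (0 < d)%N.
Hypothesis psi_conv0 : forall g, ~ E g -> conv0_dyadic psi g.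

Definition heavy_child k m : {ffun 'I_d -> bool} :=
  [arg max_(s > [ffun=> false]) `|series_qm psi k.+1 (child m s)| ]%O.

Lemma heavy_child_ge k m : valid_index k m ->
  ncubes R d k * `|series_qm psi k m| <=
  ncubes R d k.+1 * `|series_qm psi k.+1 (child m (heavy_child k m))|.
Proof.
move=> v; have heavy s : `|series_qm psi k.+1 (child m s)| <=
    `|series_qm psi k.+1 (child m (heavy_child k m))|.
  by rewrite /heavy_child; case: Order.TotalTheory.arg_maxP => // s' _; apply.
rewrite ncubesS -mulrA ler_pM2l ?ncubes_gt0 // (series_qm_split psi v).
apply: le_trans (ler_norm_sum _ _ _) _.
apply: le_trans (ler_sum _ (fun s _ => heavy s)) _.
by rewrite sumr_const card_ffun card_bool card_ord mulr_natl.
Qed.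

Section HeavyPath.
Variables (k0 : nat) (m0 : mindex d).
Hypothesis m0_valid : valid_index k0 m0.

Fixpoint heavy_path j : mindex d :=
  if j is j'.+1 then child (heavy_path j') (heavy_child (k0 + j') (heavy_path j')) else m0.

Definition heavy_point : point d := fun l t =>
  if (t < k0)%N then bit (m0 l) (k0.-1 - t) else heavy_child t (heavy_path (t - k0)) l.

Lemma heavy_path_valid j : valid_index (k0 + j) (heavy_path j).
Proof. by elim: j => [|j IH] /=; rewrite ?addn0 ?addnS //; apply: child_valid. Qed.

Lemma heavy_path_ge j : ncubes R d k0 * `|series_qm psi k0 m0| <=
  ncubes R d (k0 + j) * `|series_qm psi (k0 + j) (heavy_path j)|.
Proof.
elim: j => [|j IH] /=; first by rewrite addn0.
by apply: le_trans IH _; rewrite addnS; apply: heavy_child_ge (heavy_path_valid j).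
Qed.

Lemma in_cube_heavy_point j : in_cube (k0 + j) (heavy_path j) heavy_point.
Proof.
elim: j => [|j IH] /=; first by rewrite addn0 => l t tk; rewrite /heavy_point tk.
rewrite addnS; apply/in_cube_child; split => // l.
by rewrite /heavy_point ltnNge leq_addr addKn.
Qed.

End HeavyPath.

Lemma series_qm_eq0_off k m : valid_index k m -> ~ meets E k m -> series_qm psi k m = 0.
Proof.
move=> v nm; apply/eqP; apply: contraT => nz.
have notE : ~ E (heavy_point k m).
  move=> Eg; apply: nm; exists (heavy_point k m); split=> //.
  by have := @in_cube_heavy_point k m 0; rewrite addn0.
have pos : 0 < ncubes R d k * `|series_qm psi k m| by rewrite mulr_gt0 ?ncubes_gt0 ?normr_gt0.
have [j Hj] := psi_conv0 notE pos.
have := Hj (k + j)%N (leq_addl _ _).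
rewrite psum_dyadic // (in_cube_index_eq (heavy_path_valid v j) (@in_cube_heavy_point k m j)).
by rewrite normrM gtr0_norm ?ncubes_gt0 // ltNge (heavy_path_ge v).
Qed.

End Support.

(** * The quasimeasure τ_E *)

Section QuasiMeasure.
Variables (R : realType) (d : nat) (E : point d -> Prop) (tau : nat -> mindex d -> R).
Hypothesis tauE : is_tau_E E tau.

Lemma tau_neq0_meets k m : valid_index k m -> tau k m != 0 -> meets E k m.
Proof.
case: tauE => _ _ tau0 _ _ v nz; apply: contrapT => nm.
by move: nz; rewrite (tau0 k m v).2 ?eqxx.
Qed.

Lemma meets_tau_neq0 k m : valid_index k m -> meets E k m -> tau k m != 0.
Proof. by case: tauE => _ _ tau0 _ _ v mE; apply/eqP => /(tau0 k m v). Qed.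

Lemma sum_tau_grid k : \sum_(m : grid d k) tau k (gval m) = 1.
Proof.
case: tauE => tau_top _ _ tau_split _; elim: k => [|k IH].
  rewrite (eq_bigr (fun _ => 1)) ?sumr_const; last first.
    by move=> m _; rewrite (valid_index0 (gval_valid m)).
  by rewrite card_ffun card_ord expn0 exp1n.
rewrite (sum_grid_child k (tau k.+1)) -IH; apply: eq_bigr => m _.
by rewrite (tau_split _ _ (gval_valid m)).
Qed.

Lemma wcoef_tau_rank k k' n : valid_index k n -> (k <= k')%N ->
  wcoef k' (tau k') n = wcoef k (tau k) n.
Proof.
case: tauE => _ _ _ tau_split _ v /subnK <-; elim: (k' - k)%N => [|j IH] //.
have vj : valid_index (j + k) n.
  by move=> l; apply: leq_trans (v l) _; rewrite leq_exp2l ?leq_addl.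
rewrite addSn wcoef_child // -IH /wcoef; apply: eq_bigr => m _.
by rewrite (tau_split _ _ (gval_valid m)).
Qed.

Lemma tauhat_wcoef k n : valid_index k n -> tauhat tau n = wcoef k (tau k) n.
Proof.
move=> v; set k0 := (\max_(j < d) n j)%N.
have v0 : valid_index k0 n.
  move=> l; apply: leq_trans (ltn_expl (n l) (ltnSn 1)) _.
  by rewrite leq_exp2l // /k0 (leq_bigmax l).
by rewrite -(wcoef_tau_rank v (leq_maxl k k0)) (wcoef_tau_rank v0 (leq_maxr k k0)).
Qed.

Hypothesis uniform_branching : forall k, exists N : nat, forall m, valid_index k m ->
  meets E k m -> #|[set s : {ffun 'I_d -> bool} | `[< meets E k.+1 (child m s) >]]| = N.

Lemma tau_level_const k : exists c : R, forall m, valid_index k m -> tau k m = 0 \/ tau k m = c.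
Proof.
case: tauE => tau_top _ tau0 tau_split tau_equal.
elim: k => [|k [c IH]]; first by exists 1 => m /valid_index0 ->; right.
have [N HN] := uniform_branching k.
exists (c / N%:R) => _ /valid_child_decomp [p [s [vp ->]]].
have [->|nz] := eqVneq (tau k.+1 (child p s)) 0; [by left | right].
have meets_s := tau_neq0_meets (child_valid s vp) nz.
have meets_p := meets_parent meets_s.
have tau_p : tau k p = N%:R * tau k.+1 (child p s).
  rewrite tau_split // (bigID (fun s' => `[< meets E k.+1 (child p s') >])) /=.
  rewrite [X in _ + X]big1 ?addr0 => [|s' /asboolPn nm]; last first.
    exact/(tau0 _ _ (child_valid s' vp)).
  rewrite (eq_bigr (fun _ => tau k.+1 (child p s))) => [|s' /asboolP ms'].
    rewrite sumr_const -(HN p vp meets_p) mulr_natl; congr (_ *+ _).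
    by apply: eq_card => s'; rewrite inE.
  exact: tau_equal.
have /IH [tau_p0|<-] := vp; first by move: (meets_tau_neq0 vp meets_p); rewrite tau_p0 eqxx.
have N_neq0 : N%:R != 0 :> R.
  by apply: contraTneq (meets_tau_neq0 vp meets_p) => N0; rewrite tau_p N0 mul0r eqxx.
by rewrite tau_p [_ / _]mulrC mulKf.
Qed.

End QuasiMeasure.

(** * The set F *)

Lemma mseq_ge s : (s <= mseq s)%N.
Proof. by elim: s => //= s IH; lia. Qed.

Lemma mseq_homo : {homo mseq : s s' / (s < s')%N}.
Proof. by apply: homo_ltn => [y x z|s /=]; [apply: ltn_trans | lia]. Qed.

Lemma mseq_inj : injective mseq.
Proof. exact/incn_inj/leq_mono/mseq_homo. Qed.

Section SetF.
Variables (R : realType) (d : nat).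

Definition parity (s : {ffun 'I_d -> bool}) : R := \prod_l (-1) ^+ s l.

(* The value W^{(m_s)}_{𝐦𝐦'} that F_s prescribes for R_{2m_s·1} on Δ^{(2m_s)}_{2^{m_s}𝐦+𝐦'}. *)
Definition fsign s (m : mindex d) : R :=
  walshk R (mseq s) (fun l => m l %/ 2 ^ mseq s)%N (fun l => m l %% 2 ^ mseq s)%N.

Lemma fsign_sqr s m : fsign s m ^+ 2 = 1.
Proof. exact: walshk_sqr. Qed.

Definition inFs s (g : point d) : bool :=
  rademacher R (2 * mseq s) g == fsign s (cube_index (2 * mseq s) g).

Lemma setFsP s g : setFs R s g <-> inFs s g.
Proof.
rewrite /setFs /inFs /fsign; set M := mseq s.
have e2 : (2 ^ (2 * M) = 2 ^ M * 2 ^ M)%N by rewrite mul2n -addnn expnD.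
have M_gt0 := pow2_gt0 M.
split=> [[m [m' [vm [vm' [c ->]]]]]|/eqP P].
  have v : valid_index (2 * M) (fun l => 2 ^ M * m l + m' l)%N.
    by move=> l; rewrite e2; have := vm l; have := vm' l; move: (2 ^ M)%N => X; nia.
  apply/eqP; rewrite (in_cube_index_eq v c); congr walshk.
    by apply: funext => l; rewrite mulnC divnMDl // divn_small ?addn0.
  by apply: funext => l; rewrite mulnC modnMDl modn_small.
exists (fun l => cube_index (2 * M) g l %/ 2 ^ M)%N.
exists (fun l => cube_index (2 * M) g l %% 2 ^ M)%N.
split; first by move=> l; rewrite ltn_divLR // -e2; apply: cube_index_valid.
split; first by move=> l; rewrite ltn_pmod.
split=> //; rewrite (_ : (fun l => _) = cube_index (2 * M) g); first exact: in_cube_index.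
by apply: funext => l; rewrite mulnC -divn_eq.
Qed.

Lemma setFP g : setF R g <-> forall s, inFs s g.
Proof. by split=> F s; apply/setFsP. Qed.

Lemma eq_inFs s g g' : (forall l t, (t <= 2 * mseq s)%N -> g l t = g' l t) ->
  inFs s g = inFs s g'.
Proof.
move=> eq_g; rewrite /inFs !rademacherE (@eq_cube_index _ _ g g') => [|l t ht].
  by congr (_ == _); apply: eq_bigr => l _; rewrite eq_g.
exact/eq_g/ltnW.
Qed.

Lemma inFs_cube s k m g : k = (2 * mseq s)%N -> valid_index k m -> in_cube k m g ->
  inFs s g = (\prod_l (-1) ^+ g l k == fsign s m).
Proof. by move=> -> v c; rewrite /inFs rademacherE (in_cube_index_eq v c). Qed.

Lemma meets_setF_child_parity s k m sg : k = (2 * mseq s)%N -> valid_index k m ->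
  meets (@setF R d) k.+1 (child m sg) -> parity sg = fsign s m.
Proof.
move=> ek v [g [/in_cube_child[c g_k] /setFP /(_ s)]].
by rewrite (inFs_cube ek v c) => /eqP <-; apply: eq_bigr => l _; rewrite g_k.
Qed.

Section Flips.
Hypothesis d_gt0 : (0 < d)%N.
Let i0 : 'I_d := Ordinal d_gt0.

Definition flip p (g : point d) : point d :=
  fun l t => if (l == i0) && (t == p) then ~~ g l t else g l t.

Lemma rademacher_flip p g : rademacher R p (flip p g) = - rademacher R p g.
Proof.
rewrite !rademacherE (bigD1 i0) // [in RHS](bigD1 i0) //= /flip !eqxx -mulNr; congr (_ * _).
  by case: (g i0 p); rewrite ?expr0 ?expr1 ?opprK.
by apply: eq_bigr => l /negbTE ->.
Qed.

Lemma cube_index_flip p g : cube_index p (flip p g) = cube_index p g.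
Proof. by apply: eq_cube_index => l t tp; rewrite /flip (ltn_eqF tp) andbF. Qed.

Lemma inFs_flip s g : ~~ inFs s g -> inFs s (flip (2 * mseq s) g).
Proof.
rewrite /inFs rademacher_flip cube_index_flip.
have sign_cases (x : R) : x ^+ 2 = 1 -> x = 1 \/ x = -1.
  by move/eqP; rewrite sqrf_eq1 => /orP[] /eqP; [left | right].
have rad_sqr : rademacher R (2 * mseq s) g ^+ 2 = 1.
  by rewrite rademacherE -prodrXl big1 // => l _; apply: sqrr_sign.
have := fsign_sqr s (cube_index (2 * mseq s) g).
by case/sign_cases => ->; case: (sign_cases _ rad_sqr) => ->; rewrite ?opprK ?eqxx.
Qed.

Section Completion.
Variables (k : nat) (h : point d).

(* Enforce the constraints F_j with 2m_j > k in increasing order of j, each by flipping digit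
   2m_j of one coordinate if needed; this leaves the digits seen by earlier constraints intact. *)
Fixpoint repair j : point d :=
  if j is j'.+1 then
    let g := repair j' in
    if (k < 2 * mseq j')%N && ~~ inFs j' g then flip (2 * mseq j') g else g
  else h.

Definition repaired : point d := fun l t => repair t.+1 l t.

Lemma repair_low j l t : (t <= k)%N -> repair j l t = h l t.
Proof.
move=> tk; elim: j => //= j IH; case: ifP => // /andP[kj _].
rewrite /flip (_ : t == _ = false) ?andbF //.
by apply/negbTE; rewrite neq_ltn (leq_ltn_trans tk kj).
Qed.

Lemma repair_stable i j l t : (forall j', (j <= j' < j + i)%N -> 2 * mseq j' != t) ->
  repair (j + i) l t = repair j l t.
Proof.
elim: i => [|i IH] untouched; first by rewrite addn0.
have no_i : (2 * mseq (j + i) == t) = false by apply/negbTE/untouched; lia.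
have IH' : repair (j + i) l t = repair j l t.
  by apply: IH => j' /andP[lo hi]; apply: untouched; lia.
by rewrite addnS /=; case: ifP => _; rewrite // /flip (eq_sym t) no_i andbF.
Qed.

Lemma inFs_repair j : (k < 2 * mseq j)%N -> inFs j (repair j.+1).
Proof.
by move=> kj /=; rewrite kj /=; case: (boolP (inFs j (repair j))) => //= /inFs_flip.
Qed.

Lemma repaired_repair i l t : (t <= 2 * mseq i)%N -> repaired l t = repair i.+1 l t.
Proof.
move=> ti; rewrite /repaired; case: (leqP t i) => hti.
  have -> : i.+1 = (t.+1 + (i - t))%N by lia.
  rewrite repair_stable // => j' /andP[lo hi].
  by have := mseq_ge j'; lia.
have -> : t.+1 = (i.+1 + (t - i))%N by lia.
rewrite repair_stable // => j' /andP[lo hi].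
by have := @mseq_homo i j'; lia.
Qed.

Lemma repaired_low l t : (t <= k)%N -> repaired l t = h l t.
Proof. exact: repair_low. Qed.

Lemma setF_repaired : (forall i, (2 * mseq i <= k)%N -> inFs i h) -> setF R repaired.
Proof.
move=> Fh; apply/setFP => i; case: (leqP (2 * mseq i) k) => ik.
  rewrite (@eq_inFs i _ h); first exact: Fh.
  by move=> l t ht; apply/repaired_low/leq_trans/ik.
rewrite (@eq_inFs i _ (repair i.+1)); first exact: inFs_repair.
by move=> l t ht; apply: repaired_repair.
Qed.

End Completion.

Lemma meets_setF_child k m sg : valid_index k m -> meets (@setF R d) k m ->
  (forall s, k = (2 * mseq s)%N -> parity sg = fsign s m) ->
  meets (@setF R d) k.+1 (child m sg).
Proof.
move=> v [g [c Fg]] par_sg.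
pose h : point d := fun l t => if t == k then sg l else g l t.
have h_low l t : (t < k)%N -> h l t = g l t by move=> tk; rewrite /h ltn_eqF.
have c_h : in_cube k.+1 (child m sg) h.
  by apply/in_cube_child; split=> [l t tk|l]; rewrite /h ?eqxx // ltn_eqF ?c.
have Fh i : (2 * mseq i <= k)%N -> inFs i h.
  rewrite leq_eqVlt => /orP[/eqP ek|lt].
    have [c_k _] := (in_cube_child _ _ _ _).1 c_h.
    rewrite (inFs_cube (esym ek) v c_k) -(par_sg i (esym ek)).
    by apply/eqP/eq_bigr => l _; rewrite /h eqxx.
  rewrite (@eq_inFs i _ g); first by move/setFP: Fg.
  by move=> l t ti; apply/h_low/leq_ltn_trans/lt.
exists (repaired k h); split; last exact: setF_repaired.
by move=> l t tk; rewrite repaired_low; [exact: c_h | exact: tk].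
Qed.

Definition flip_sign (s : {ffun 'I_d -> bool}) : {ffun 'I_d -> bool} :=
  [ffun l => (l == i0) (+) s l].

Lemma flip_signK : involutive flip_sign.
Proof. by move=> s; apply/ffunP => l; rewrite !ffunE addbA addbb. Qed.

Lemma parity_flip_sign s : parity (flip_sign s) = - parity s.
Proof.
rewrite /parity (bigD1 i0) // [in RHS](bigD1 i0) //= !ffunE eqxx signr_addb expr1.
rewrite !mulN1r -mulNr; by congr (_ * _); apply: eq_bigr => l /negbTE ne; rewrite ffunE ne.
Qed.

Lemma card_parity v : v ^+ 2 = 1 ->
  #|[set s : {ffun 'I_d -> bool} | parity s == v]| =
  #|[set s : {ffun 'I_d -> bool} | parity s == 1]|.
Proof.
move/eqP; rewrite sqrf_eq1 => /orP[/eqP->//|/eqP->].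
rewrite -(card_imset _ (inv_inj flip_signK)); apply: eq_card => s; rewrite inE.
apply/imsetP/idP => [[s' /[!inE] /eqP p ->]|/eqP p]; first by rewrite parity_flip_sign p opprK.
by exists (flip_sign s); rewrite ?flip_signK // inE parity_flip_sign p.
Qed.

Lemma setF_uniform_branching k : exists N : nat, forall m, valid_index k m ->
  meets (@setF R d) k m ->
  #|[set s : {ffun 'I_d -> bool} | `[< meets (@setF R d) k.+1 (child m s) >]]| = N.
Proof.
case: (pselect (exists s, k = (2 * mseq s)%N)) => [[s0 ek]|nk].
  exists #|[set s : {ffun 'I_d -> bool} | parity s == 1]| => m v mF.
  rewrite -(card_parity (fsign_sqr s0 m)); apply: eq_card => s; rewrite !inE.
  apply/asboolP/eqP => [|par_s]; first exact: meets_setF_child_parity ek v.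
  by apply: meets_setF_child => // s1 ek1; rewrite (mseq_inj (_ : mseq s1 = mseq s0)) //; lia.
exists #|{: {ffun 'I_d -> bool}}| => m v mF; apply: eq_card => s; rewrite !inE.
by apply/asboolP/meets_setF_child => // s1 ek1; case: nk; exists s1.
Qed.

End Flips.
End SetF.

Section UpperBlock.
Variables (R : realType) (d : nat).

Definition upper K (n : mindex d) : mindex d := fun l => (n l + 2 ^ K)%N.

Lemma upper_valid K n : valid_index K n -> valid_index K.+1 (upper K n).
Proof. by move=> v l; move: (v l); rewrite /upper expnS; lia. Qed.

Lemma walshk_upper K n m : valid_index K n -> walshk R K (upper K n) m = walshk R K n m.
Proof.
move=> v; apply: eq_bigr => l _; apply: eq_bigr => t _.
by rewrite /upper bit_addX ?(ltn_eqF (ltn_ord t)) // ltnW.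
Qed.

Lemma wcoef_upper s K (q : nat -> mindex d -> R) n : K = (2 * mseq s)%N -> valid_index K n ->
  (forall m, valid_index K m -> q K m = \sum_(sg : {ffun 'I_d -> bool}) q K.+1 (child m sg)) ->
  (forall m sg, valid_index K m -> q K.+1 (child m sg) != 0 ->
     meets (@setF R d) K.+1 (child m sg)) ->
  wcoef K.+1 (q K.+1) (upper K n) = wcoef K (fun m => fsign R s m * q K m) n.
Proof.
move=> eK v q_split q_supp.
rewrite /wcoef (sum_grid_child K (fun m => walshk R K.+1 (upper K n) m * q K.+1 m)).
apply: eq_bigr => m _; rewrite (q_split _ (gval_valid m)) !mulr_sumr; apply: eq_bigr => sg _.
rewrite walshk_child walshk_upper // -mulrA; congr (_ * _).
have [->|nz] := eqVneq (q K.+1 (child (gval m) sg)) 0; first by rewrite !mulr0.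
rewrite -(meets_setF_child_parity eK (gval_valid m) (q_supp _ _ (gval_valid m) nz)).
by congr (_ * _); apply: eq_bigr => l _; rewrite /upper bit_addX ?eqxx ?andbT.
Qed.

End UpperBlock.

Lemma norm_coef_le_sum_series_qm (R : realType) d (psi : mindex d -> R) k n :
  valid_index k n -> `|psi n| <= \sum_(m : grid d k) `|series_qm psi k (gval m)|.
Proof.
move=> v; rewrite -(wcoef_series_qm psi v); apply: le_trans (ler_norm_sum _ _ _) _.
by apply: ler_sum => m _; rewrite normrM normr_walshk mul1r.
Qed.

Lemma sum_norm_le_uniform (R : realFieldType) (I : finType) (a b : I -> R) (c e : R) :
  0 < e -> (forall i, b i = 0 \/ b i = c) -> (forall i, b i = 0 -> a i = 0) ->
  \sum_i b i = 1 -> \sum_i a i ^+ 2 <= e ^+ 2 * \sum_i b i ^+ 2 -> \sum_i `|a i| <= e.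
Proof.
move=> e_gt0 b_01 a_supp b_sum a_sqr.
have b_sqr_sum : \sum_i b i ^+ 2 = c.
  rewrite -[RHS]mulr1 -b_sum mulr_sumr; apply: eq_bigr => i _.
  by case: (b_01 i) => ->; rewrite expr2 ?mulr0.
have c_gt0 : 0 < c.
  rewrite lt0r; apply/andP; split; last by rewrite -b_sqr_sum sumr_ge0 // => i _; apply: sqr_ge0.
  apply: contra_neq (oner_neq0 R) => c0; rewrite -b_sum big1 // => i _.
  by case: (b_01 i) => ->.
(* AM-GM termwise; summed over i, this is Cauchy-Schwarz on the support of [b]. *)
have amgm i : 2 * e * (c * `|a i|) <= e ^+ 2 * b i ^+ 2 + a i ^+ 2.
  have -> : c * `|a i| = b i * `|a i|.
    by case: (b_01 i) => [b0|->]; rewrite // a_supp ?normr0 ?mulr0.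
  rewrite -[a i ^+ 2]real_normK ?num_real //.
  have : 0 <= (e * b i - `|a i|) ^+ 2 by apply: sqr_ge0.
  lra.
have : 2 * e * c * \sum_i `|a i| <= 2 * e ^+ 2 * c.
  rewrite -mulrA !mulr_sumr; apply: le_trans (ler_sum _ (fun i _ => amgm i)) _.
  rewrite big_split /= -mulr_sumr b_sqr_sum; rewrite b_sqr_sum in a_sqr; lra.
rewrite (_ : 2 * e ^+ 2 * c = 2 * e * c * e); last by rewrite expr2; ring.
by rewrite ler_pM2l // !mulr_gt0.
Qed.

Lemma sum_series_qm_sqr_le (R : realType) d (tau : nat -> mindex d -> R) (psi : mindex d -> R)
    s K (e : R) : K = (2 * mseq s)%N -> is_tau_E (@setF R d) tau ->
  (forall k m, valid_index k m -> ~ meets (@setF R d) k m -> series_qm psi k m = 0) ->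
  (forall n, valid_index K n -> `|psi (upper K n)| <= e * `|tauhat tau (upper K n)|) -> 0 <= e ->
  \sum_(m : grid d K) series_qm psi K (gval m) ^+ 2 <=
  e ^+ 2 * \sum_(m : grid d K) tau K (gval m) ^+ 2.
Proof.
move=> eK tauF psi_off psi_le e_ge0; have [_ _ _ tau_split _] := tauF.
have psi_upper n : valid_index K n ->
    psi (upper K n) = wcoef K (fun m => fsign R s m * series_qm psi K m) n.
  move=> v; rewrite -(wcoef_series_qm psi (upper_valid v)).
  rewrite (wcoef_upper (s := s) (q := series_qm psi)) //.
    by move=> m vm; apply: series_qm_split.
  move=> m sg vm nz; apply: contrapT => nm; move: nz.
  by rewrite psi_off ?eqxx //; apply: child_valid.
have tau_upper n : valid_index K n ->
    tauhat tau (upper K n) = wcoef K (fun m => fsign R s m * tau K m) n.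
  move=> v; rewrite (tauhat_wcoef tauF (upper_valid v)) (wcoef_upper (s := s) (q := tau)) //.
    by move=> m vm; apply: tau_split.
  by move=> m sg vm nz; apply: (tau_neq0_meets tauF _ nz); apply: child_valid.
have parseval (a : mindex d -> R) :
    \sum_(n : grid d K) wcoef K (fun m => fsign R s m * a m) (gval n) ^+ 2 =
    ncubes R d K * \sum_(m : grid d K) a (gval m) ^+ 2.
  by rewrite wcoef_parseval; congr (_ * _); apply: eq_bigr => m _; rewrite exprMn fsign_sqr mul1r.
rewrite -(ler_pM2l (ncubes_gt0 R d K)) mulrCA -!parseval mulr_sumr.
apply: ler_sum => n _; have vn := gval_valid n.
rewrite -psi_upper // -tau_upper // -exprMn.
rewrite -[psi _ ^+ 2]real_normK ?num_real // -[(e * _) ^+ 2]real_normK ?num_real //.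
rewrite ler_sqr ?nnegrE // normrM (ger0_norm e_ge0).
exact: psi_le.
Qed.

Theorem theorem3 (R : realType) (d : nat)
    (tau : nat -> mindex d -> R) (psi : mindex d -> R) :
  (2 <= d)%N ->
  is_tau_E (@setF R d) tau ->
  ((forall g : point d, ~ setF R g -> conv0_rect psi g) \/
   (forall g : point d, ~ setF R g -> conv0_cube psi g)) ->
  (exists eps : mindex d -> R, vanish_at_infty eps /\
     forall n, `|psi n| <= eps n * `|tauhat tau n|) ->
  forall n, psi n = 0.
Proof.
move=> d2 tauF conv [eps [eps_small psi_le]] n.
have d_gt0 : (0 < d)%N by lia.
have psi_off : forall k m, valid_index k m -> ~ meets (@setF R d) k m -> series_qm psi k m = 0.
  apply: (series_qm_eq0_off d_gt0) => g notF.
  by case: conv => [/(_ g notF)/conv0_rect_dyadic|/(_ g notF)/conv0_cube_dyadic].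
apply/eqP; rewrite -normr_le0; apply/ler_addgt0Pr => e e_gt0; rewrite add0r.
have [M eps_lt] := eps_small e e_gt0.
set s := (M + \max_(l < d) n l)%N; set K := (2 * mseq s)%N.
have s_lt : (s < 2 ^ K)%N.
  by apply: leq_ltn_trans (ltn_expl K (ltnSn 1)); have := mseq_ge s; lia.
have vn : valid_index K n.
  by move=> l; apply: leq_ltn_trans s_lt; apply: leq_trans (leq_addl M _); apply: leq_bigmax.
have [c tau_c] := tau_level_const tauF (setF_uniform_branching R d_gt0) K.
have [_ _ tau0 _ _] := tauF.
apply: le_trans (norm_coef_le_sum_series_qm psi vn) _.
apply: (@sum_norm_le_uniform _ _ _ (fun m => tau K (gval m)) c) => //.
- by move=> m; apply: tau_c (gval_valid m).
- by move=> m t0; apply: psi_off (gval_valid m) _; apply/(tau0 _ _ (gval_valid m)).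
- exact: sum_tau_grid tauF K.
apply: (sum_series_qm_sqr_le (s := s)) (ltW e_gt0) => // n' _.
apply: le_trans (psi_le _) _; apply: ler_wpM2r => //; apply: le_trans (ler_norm _) (ltW _).
apply: eps_lt; apply: leq_trans (leq_bigmax (Ordinal d_gt0)).
by rewrite /upper; move: s_lt; rewrite /s; lia.
Qed.
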